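(* Let $k\ge2$ and $\varepsilon>0$, and let $a,b,K,s$, the sets $C_x\subseteq[K]$ ($x\in[k]$) and the randomiser $\mathcal{R}:[k]\to[K]$ be the generalised Hadamard Response with parameter $\varepsilon$ as defined in the context. For a distribution $\mathbf{p}$ on $[k]$, let $\Phi_\varepsilon(\mathbf{p})$ denote the distribution of $\mathcal{R}(x)$ for $x\sim\mathbf{p}$, i.e. $\Phi_\varepsilon(\mathbf{p})(y)=\frac{1}{se^\varepsilon+K-s}\big((e^\varepsilon-1)\sum_{x\in[k]}\mathbf{p}(x)\mathbf{1}\{y\in C_x\}+1\big)$. Then for any two distributions $\mathbf{p},\mathbf{q}$ on $[k]$, \[ \|\Phi_\varepsilon(\mathbf{p})-\Phi_\varepsilon(\mathbf{q})\|_2^2\ge\frac{1}{2s}\Big(\frac{e^\varepsilon-1}{e^\varepsilon+\frac Ks-1}\Big)^2\|\mathbf{p}-\mathbf{q}\|_2^2, \] and if $\mathbf{p}=\mathbf{q}$ then $\|\Phi_\varepsilon(\mathbf{p})-\Phi_\varepsilon(\mathbf{q})\|_2=0$.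
   Context: Generalised Hadamard Response with parameter $\varepsilon>0$ on $[k]$: $a=2^{\lfloor\log_2\min(e^{\varepsilon},2k)\rfloor}$, $b=2^{\lceil\log_2(k/a+1)\rceil}$, $K=ab$, $s=b/2$. Let $H_b$ be the $b\times b$ Sylvester Hadamard matrix and $P_b$ the $b\times b$ all-$(-1)$ matrix; $\bar H_{a,b}\in\{-1,1\}^{K\times K}$ is the $a\times a$ block matrix with $H_b$ on the diagonal blocks and $P_b$ in all off-diagonal blocks. The $a(b-1)\ge k$ rows of $\bar H_{a,b}$ that are not the first row of a diagonal copy of $H_b$ each have exactly $s$ entries $+1$; each $x\in[k]$ is mapped to a distinct such row, and $C_x\subseteq[K]$ is the set of columns where that row equals $+1$. The randomiser is $\Pr[\mathcal{R}(x)=y]=\frac{(e^\varepsilon-1)\mathbf{1}\{y\in C_x\}+1}{se^\varepsilon+K-s}$ for $y\in[K]$. *)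

From mathcomp Require Import all_boot all_order all_algebra.
From mathcomp Require Import all_classical all_reals all_analysis.
Set Implicit Arguments. Unset Strict Implicit. Unset Printing Implicit Defensive.
Import Order.TTheory GRing.Theory Num.Theory.
Local Open Scope ring_scope.

Section GHR.
Variable R : realType.

Definition log2 (x : R) : R := ln x / ln 2.

Definition ghr_ma (eps : R) (k : nat) : nat :=
  `| Num.floor (log2 (Num.min (expR eps) (2 * k%:R)%R)) |%N.
Definition ghr_a (eps : R) (k : nat) : nat := (2 ^ ghr_ma eps k)%N.

Definition ghr_mb (eps : R) (k : nat) : nat :=
  `| Num.ceil (log2 (k%:R / (ghr_a eps k)%:R + 1)%R) |%N.
Definition ghr_b (eps : R) (k : nat) : nat := (2 ^ ghr_mb eps k)%N.

Definition ghr_K (eps : R) (k : nat) : nat := (ghr_a eps k * ghr_b eps k)%N.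
Definition ghr_s (eps : R) (k : nat) : nat := (ghr_b eps k %/ 2)%N.

End GHR.

(* Sylvester Hadamard matrix H_{2^m}, entries indexed by naturals < 2^m,
   via the recursion H_1 = [1], H_{2n} = [[H_n, H_n], [H_n, -H_n]]. *)
Fixpoint sylvester (m i j : nat) : int :=
  match m with
  | 0 => 1
  | m'.+1 =>
      let h := (2 ^ m')%N in
      (if (h <= i)%N && (h <= j)%N then -1 else 1) *
      sylvester m' (i %% h) (j %% h)
  end.

(* \bar H_{a,b}: a x a block matrix (blocks of size b = 2^mb), with H_b on the
   diagonal blocks and the all-(-1) matrix P_b off the diagonal. *)
Definition barH (mb i j : nat) : int :=
  let b := (2 ^ mb)%N in
  if (i %/ b == j %/ b)%N then sylvester mb (i %% b) (j %% b) else -1.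

Section GHR2.
Variable R : realType.
Variables (eps : R) (k : nat).
(* assignment of inputs x in [k] to rows of \bar H_{a,b} *)
Variable row : 'I_k -> 'I_(ghr_K eps k).

Definition ghr_C (x : 'I_k) : {set 'I_(ghr_K eps k)} :=
  [set y : 'I_(ghr_K eps k) | barH (ghr_mb eps k) (row x) y == 1].

Definition ghr_prob (x : 'I_k) (y : 'I_(ghr_K eps k)) : R :=
  ((expR eps - 1) * (y \in ghr_C x)%:R + 1) /
  ((ghr_s eps k)%:R * expR eps + (ghr_K eps k)%:R - (ghr_s eps k)%:R).

Definition ghr_Phi (p : 'I_k -> R) (y : 'I_(ghr_K eps k)) : R :=
  \sum_(x < k) p x * ghr_prob x y.
End GHR2.

Definition is_distr (R : realType) (n : nat) (p : 'I_n -> R) : Prop :=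
  (forall x, 0 <= p x) /\ \sum_(x < n) p x = 1.

Definition sqnorm (R : realType) (n : nat) (v : 'I_n -> R) : R :=
  \sum_(i < n) v i ^+ 2.

(* Since p and q both have mass 1, Phi(p) - Phi(q) is (e^eps - 1) / (s e^eps + K - s)
   times the vector sum_x (p x - q x) 1_{C_x}.  On the block of b = 2s columns holding
   row(x), the indicator 1_{C_x} equals (h_x + 1) / 2, where h_x is a row of H_b other
   than the first.  The rows h_x of one block are pairwise orthogonal (row is injective)
   and orthogonal to the all-ones first row, so adding the constant part cannot decrease
   the norm and each block contributes at least b/4 times the squared mass of p - q on
   it.  Summing over blocks gives b/4 ||p - q||^2 = s/2 ||p - q||^2. *)

From mathcomp Require Import all_boot all_order all_algebra.
From mathcomp Require Import all_classical all_reals all_analysis.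
From mathcomp Require Import zify ring lra.
Set Implicit Arguments.
Unset Strict Implicit.
Unset Printing Implicit Defensive.

Import Order.TTheory GRing.Theory Num.Theory.
Local Open Scope ring_scope.

Lemma sum_nat_blocks (V : nmodType) a b (F : nat -> V) :
  \sum_(0 <= y < a * b) F y = \sum_(0 <= B < a) \sum_(0 <= j < b) F (B * b + j)%N.
Proof.
elim: a => [|a IH]; first by rewrite mul0n !big_geq.
rewrite mulSnr big_nat_recr //= -IH (big_cat_nat _ (leq_addr _ _)) //=; congr (_ + _).
by rewrite -{1}[(a * b)%N]add0n big_addn addKn; under eq_bigr do rewrite addnC.
Qed.

Lemma sylvester_pm m i j : sylvester m i j = 1 \/ sylvester m i j = -1.
Proof.
elim: m i j => [|m IH] i j /=; first by left.
by case: (IH (i %% 2 ^ m)%N (j %% 2 ^ m)%N) => ->; case: ifP => _;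
  rewrite ?mulr1 ?mulrNN; [right|left|left|right].
Qed.

Lemma sylvester0n m j : sylvester m 0 j = 1.
Proof.
elim: m j => [|m IH] j //=.
by rewrite mod0n IH leqNgt expn_gt0 mulr1.
Qed.

Lemma sylvesterS_lo m i j : (j < 2 ^ m)%N ->
  sylvester m.+1 i j = sylvester m (i %% 2 ^ m) j.
Proof.
by move=> lt_j /=; rewrite (modn_small lt_j) [(_ <= j)%N]leqNgt lt_j andbF mul1r.
Qed.

Lemma sylvesterS_hi m i j : (j < 2 ^ m)%N ->
  sylvester m.+1 i (2 ^ m + j) = (-1) ^+ (2 ^ m <= i)%N * sylvester m (i %% 2 ^ m) j.
Proof.
move=> lt_j /=; rewrite leq_addr andbT modnDl (modn_small lt_j).
by case: (2 ^ m <= i)%N.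
Qed.

(* For u < 2h, the sign (-1)^[h <= u] and u mod h together determine u. *)
Lemma sign_eq_mod_half h i i' : (i < 2 * h)%N -> (i' < 2 * h)%N ->
  (1 + (-1) ^+ (h <= i)%N * (-1) ^+ (h <= i')%N) * (i %% h == i' %% h)%N%:R
  = 2 * (i == i')%:R :> int.
Proof.
move=> lt_i lt_i'.
have mod_hi u : (h <= u < 2 * h)%N -> (u %% h = u - h)%N.
  by case/andP=> le_hu lt_u; rewrite -{1}(subnK le_hu) modnDr modn_small //; lia.
case: (leqP h i) => hi; case: (leqP h i') => hi'; rewrite /= ?expr1 ?expr0.
- rewrite !mod_hi ?hi ?hi' //.
  by have -> : (i - h == i' - h)%N = (i == i') by apply/eqP/eqP; lia.
- by rewrite mulr1 subrr mul0r; have /negPf-> : i != i' by apply/eqP; lia.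
- by rewrite mul1r subrr mul0r; have /negPf-> : i != i' by apply/eqP; lia.
- by rewrite !modn_small.
Qed.

Lemma sylvester_orthogonal m i i' : (i < 2 ^ m)%N -> (i' < 2 ^ m)%N ->
  \sum_(0 <= j < 2 ^ m) sylvester m i j * sylvester m i' j
  = (i == i')%:R * (2 ^ m)%:R.
Proof.
elim: m i i' => [|m IH] i i' lt_i lt_i'.
  by move: lt_i lt_i'; rewrite !ltnS !leqn0 => /eqP-> /eqP->; rewrite big_nat1.
have lt_mod u : (u %% 2 ^ m < 2 ^ m)%N by rewrite ltn_mod expn_gt0.
rewrite expnS in lt_i lt_i' *.
rewrite sum_nat_blocks big_nat_recl // big_nat1 mul0n mul1n.
under eq_big_nat => j /andP[_ lt_j] do rewrite add0n !sylvesterS_lo //.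
under [X in _ + X]eq_big_nat => j /andP[_ lt_j] do rewrite !sylvesterS_hi //.
under [X in _ + X]eq_bigr do rewrite mulrACA.
rewrite -mulr_sumr -[X in X + _]mul1r -mulrDl IH // mulrA sign_eq_mod_half //.
by rewrite natrM; ring.
Qed.

Lemma sylvester_sum m i : (0 < i < 2 ^ m)%N ->
  \sum_(0 <= j < 2 ^ m) sylvester m i j = 0.
Proof.
case/andP=> i_gt0 lt_i.
under eq_bigr => j _ do rewrite -[sylvester m i j]mul1r -(sylvester0n m j).
by rewrite sylvester_orthogonal ?expn_gt0 // eq_sym gtn_eqF // mul0r.
Qed.

Lemma sum_nat_partition (V : nmodType) (I : finType) a (f : I -> nat) (F : I -> V) :
  (forall x, f x < a)%N -> \sum_x F x = \sum_(0 <= B < a) \sum_(x | f x == B) F x.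
Proof.
move=> f_lt; rewrite (exchange_big_dep xpredT) //=; apply: eq_bigr => x _.
by under eq_bigl do rewrite eq_sym; rewrite big_nat1_eq f_lt.
Qed.

Lemma sum_sqr_orthogonal (R : comPzRingType) (I : finType) (P : pred I) n
    (h : I -> nat -> R) (d : I -> R) :
  (forall x x', P x -> P x' -> \sum_(0 <= j < n) h x j * h x' j = (x == x')%:R * n%:R) ->
  \sum_(0 <= j < n) (\sum_(x | P x) d x * h x j) ^+ 2 = n%:R * \sum_(x | P x) d x ^+ 2.
Proof.
move=> h_orth.
under eq_bigr do rewrite expr2 mulr_suml; rewrite exchange_big mulr_sumr /=.
apply: eq_bigr => x Px.
under eq_bigr do rewrite mulr_sumr; rewrite exchange_big /=.
under eq_bigr do rewrite (eq_bigr _ (fun j _ => mulrACA _ _ _ _)) -mulr_sumr.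
rewrite (bigD1 x) //= [X in _ + X]big1 => [|x' /andP[Px' neq_x'x]].
  by rewrite addr0 h_orth // eqxx mul1r mulrC expr2.
by rewrite h_orth // eq_sym (negPf neq_x'x) mul0r mulr0.
Qed.

Lemma sum_sqr_le_shift (R : realDomainType) n (u : nat -> R) t :
  \sum_(0 <= j < n) u j = 0 ->
  \sum_(0 <= j < n) u j ^+ 2 <= \sum_(0 <= j < n) (u j + t) ^+ 2.
Proof.
move=> u_sum0; under [leRHS]eq_bigr do rewrite sqrrD.
rewrite !big_split /= -mulr_suml u_sum0 mul0r addr0 -addrA add0r lerDl.
by apply: sumr_ge0 => j _; exact: sqr_ge0.
Qed.

Lemma barH_block_indicator (R : numFieldType) m i B j : (j < 2 ^ m)%N ->
  ((barH m i (B * 2 ^ m + j) == 1)%:R : R)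
  = (i %/ 2 ^ m == B)%N%:R * ((sylvester m (i %% 2 ^ m) j)%:~R + 1) / 2.
Proof.
move=> lt_j; rewrite /barH divnMDl ?expn_gt0 // (divn_small lt_j) addn0.
rewrite modnMDl (modn_small lt_j); case: (i %/ 2 ^ m =P B)%N => _; last by rewrite !mul0r.
by case: (sylvester_pm m (i %% 2 ^ m) j) => ->; rewrite /= mul1r; field.
Qed.

Section HadamardCode.
Variables (R : realFieldType) (I : finType) (a m : nat) (g : I -> nat).
Hypotheses (g_inj : injective g) (g_lt : forall x, (g x < a * 2 ^ m)%N)
  (g_row : forall x, (g x %% 2 ^ m != 0)%N).

Local Notation b := (2 ^ m)%N.
Local Notation code d y := (\sum_x d x * (barH m (g x) y == 1)%:R).

Lemma code_block_sum_sqr_ge (d : I -> R) (B : nat) :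
  b%:R / 4 * \sum_(x | (g x %/ b == B)%N) d x ^+ 2
  <= \sum_(0 <= j < b) code d (B * b + j)%N ^+ 2.
Proof.
have lt_row x : (g x %% b < b)%N by rewrite ltn_mod expn_gt0.
pose h x j : R := (sylvester m (g x %% b) j)%:~R.
pose u j := \sum_(x | (g x %/ b == B)%N) d x * h x j.
pose t := \sum_(x | (g x %/ b == B)%N) d x.
have codeE j : (j < b)%N -> code d (B * b + j)%N = (u j + t) / 2.
  move=> lt_j; rewrite /u /t -big_split mulr_suml [RHS]big_mkcond /=.
  apply: eq_bigr => x _; rewrite barH_block_indicator //.
  by case: (g x %/ b == B)%N; rewrite /= ?mul0r ?mulr0 // mul1r; field.
have u_sum0 : \sum_(0 <= j < b) u j = 0.
  rewrite exchange_big big1 //= => x _.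
  by rewrite -mulr_sumr -rmorph_sum sylvester_sum ?lt_row ?lt0n ?g_row // mulr0.
have u_sqr : \sum_(0 <= j < b) u j ^+ 2 = b%:R * \sum_(x | (g x %/ b == B)%N) d x ^+ 2.
  apply: sum_sqr_orthogonal => x x' /eqP blk_x /eqP blk_x'.
  under eq_bigr do rewrite -intrM.
  rewrite -rmorph_sum sylvester_orthogonal ?lt_row // rmorphM /= !rmorph_nat.
  congr ((nat_of_bool _)%:R * _).
  apply/idP/idP => [/eqP eq_mod | /eqP -> //]; apply/eqP/g_inj.
  by rewrite (divn_eq (g x) b) (divn_eq (g x') b) blk_x blk_x' eq_mod.
rewrite (eq_big_nat _ _ (fun j lt_j => congr1 (fun z => z ^+ 2) (codeE j _)));
  last by move=> j /andP[].
under eq_bigr do rewrite expr_div_n.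
rewrite -mulr_suml mulrAC -u_sqr -natrX ler_wpM2r ?invr_ge0 //.
exact: sum_sqr_le_shift.
Qed.

Lemma code_sum_sqr_ge (d : I -> R) :
  b%:R / 4 * \sum_x d x ^+ 2 <= \sum_(0 <= y < a * b) code d y ^+ 2.
Proof.
have blk_lt x : (g x %/ b < a)%N by rewrite ltn_divLR ?expn_gt0.
rewrite (sum_nat_partition (fun x => d x ^+ 2) blk_lt) sum_nat_blocks mulr_sumr.
by apply: ler_sum_nat => B _; exact: code_block_sum_sqr_ge.
Qed.
End HadamardCode.

Lemma ghr_b_double (R : realType) (eps : R) k :
  ghr_s eps k != 0%N -> ghr_b eps k = (2 * ghr_s eps k)%N.
Proof. by rewrite /ghr_s /ghr_b; case: ghr_mb => [|mb] //= _; rewrite expnS mulKn. Qed.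

Section GHRDistribution.
Variables (R : realType) (eps : R) (k : nat) (row : 'I_k -> 'I_(ghr_K eps k)).

Local Notation s := (ghr_s eps k)%:R.
Local Notation K := (ghr_K eps k)%:R.
Local Notation e := (expR eps).

Lemma ghr_PhiE (p : 'I_k -> R) y :
  ghr_Phi row p y
  = ((e - 1) * \sum_x p x * (y \in ghr_C row x)%:R + \sum_x p x) / (s * e + K - s).
Proof.
rewrite /ghr_Phi /ghr_prob mulr_sumr -big_split mulr_suml.
by apply: eq_bigr => x _ /=; ring.
Qed.

Lemma ghr_Phi_sub (p q : 'I_k -> R) y : \sum_x p x = \sum_x q x ->
  ghr_Phi row p y - ghr_Phi row q y
  = (e - 1) / (s * e + K - s) * \sum_x (p x - q x) * (y \in ghr_C row x)%:R.
Proof.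
move=> sum_pq; rewrite !ghr_PhiE sum_pq.
under [in RHS]eq_bigr do rewrite mulrBl.
by rewrite sumrB; ring.
Qed.

End GHRDistribution.

Theorem lemma4p4 (R : realType) (k : nat) (eps : R)
    (hk : (2 <= k)%N) (heps : 0 < eps)
    (row : 'I_k -> 'I_(ghr_K eps k))
    (hinj : injective row)
    (hrow : forall x : 'I_k, (val (row x) %% ghr_b eps k != 0)%N) :
  (forall p q : 'I_k -> R, is_distr p -> is_distr q ->
     sqnorm (fun y => ghr_Phi row p y - ghr_Phi row q y) >=
     1 / (2 * (ghr_s eps k)%:R) *
     ((expR eps - 1) /
      (expR eps + (ghr_K eps k)%:R / (ghr_s eps k)%:R - 1)) ^+ 2 *
     sqnorm (fun x => p x - q x)) /\
  (forall p q : 'I_k -> R, is_distr p -> is_distr q -> p = q ->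
     Num.sqrt (sqnorm (fun y => ghr_Phi row p y - ghr_Phi row q y)) = 0).
Proof.
split=> [p q [_ sum_p] [_ sum_q] | p q _ _ <-]; last first.
  by rewrite /sqnorm big1 ?sqrtr0 // => y _; rewrite subrr expr0n.
rewrite /sqnorm; under [leRHS]eq_bigr do rewrite ghr_Phi_sub ?sum_p ?sum_q // exprMn.
rewrite -mulr_sumr.
have [s0 | s_neq0] := eqVneq (ghr_s eps k) 0%N.
  (* impossible for k >= 2, but then the constant is 1 / 0 = 0 *)
  rewrite s0 mulr0 div1r invr0 !mul0r.
  by apply: mulr_ge0; [exact: sqr_ge0 | apply: sumr_ge0 => y _; exact: sqr_ge0].
have b_double := ghr_b_double s_neq0.
set s := (ghr_s eps k)%:R : R; set K := (ghr_K eps k)%:R : R; set e := expR eps.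
have s_gt0 : 0 < s by rewrite ltr0n lt0n.
have D_gt0 : 0 < s * e + K - s.
  have : 0 < s * (e - 1) by rewrite mulr_gt0 // subr_gt0 expR_gt1.
  have : 0 <= K by exact: ler0n.
  lra.
have coefE : 1 / (2 * s) * ((e - 1) / (e + K / s - 1)) ^+ 2
    = ((e - 1) / (s * e + K - s)) ^+ 2 * ((ghr_b eps k)%:R / 4).
  have -> : e + K / s - 1 = (s * e + K - s) / s by field; rewrite gt_eqF.
  by rewrite b_double natrM -/s; field; rewrite !gt_eqF.
rewrite coefE -mulrA ler_wpM2l ?sqr_ge0 //.
have row_inj : injective (fun x => val (row x)) by move=> x x' /val_inj /hinj.
have := code_sum_sqr_ge row_inj (fun x => ltn_ord (row x)) hrow (fun x => p x - q x).
rewrite big_mkord => code_ge.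
under [leRHS]eq_bigr do under eq_bigr do rewrite inE.
exact: code_ge.
Qed.
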